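(* Let $\kappa$ be a regular uncountable cardinal and $I$ an ideal on $\kappa$. If $I\restriction A$ is pleasant for every $A\in I^+$, then $I$ is normal.
   Context: An ideal on $\kappa$ is a family of subsets of $\kappa$ closed under subsets and finite unions, which is $<\kappa$-complete and contains all singletons. $I^+=\{X\subseteq\kappa: X\notin I\}$. For $A\in I^+$, $I\restriction A=\{X\subseteq\kappa: X\cap A\in I\}$. For $A\subseteq\kappa$ and $X_\alpha\subseteq\kappa$, $\bigtriangledown_{\alpha\in A}X_\alpha=\{\xi<\kappa:\exists\alpha<\xi\,(\alpha\in A\wedge \xi\in X_\alpha)\}$. $I$ is normal if $X_\alpha\in I$ for all $\alpha<\kappa$ implies $\bigtriangledown_{\alpha<\kappa}X_\alpha\in I$. $I$ is pleasant if whenever $A\in I$ and $X_\alpha\in I$ for all $\alpha$, then $\bigtriangledown_{\alpha\in A}X_\alpha\in I$. *)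

(* A cardinal kappa is modelled as a type T carrying a strict
   well-order [lt] (the ordinals below kappa); subsets of kappa are
   predicates T -> Prop. *)
From Stdlib Require Import Relations Wellfounded.

Section Defs.
Variable T : Type.
Variable lt : T -> T -> Prop.

Definition strict_well_order : Prop :=
  (forall x, ~ lt x x) /\
  (forall x y z, lt x y -> lt y z -> lt x z) /\
  (forall x y, lt x y \/ x = y \/ lt y x) /\
  well_founded lt.

Definition initial_segment (a : T) := { b : T | lt b a }.

Definition is_cardinal : Prop :=
  forall a : T, ~ exists f : T -> initial_segment a,
      forall x y, f x = f y -> x = y.

Definition is_regular : Prop :=
  forall (a : T) (f : initial_segment a -> T),
    exists g : T, forall b, lt (f b) g.

Definition uncountable : Prop :=
  ~ exists f : T -> nat, forall x y, f x = f y -> x = y.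

Definition regular_uncountable_cardinal : Prop :=
  strict_well_order /\ is_cardinal /\ is_regular /\ uncountable.

Definition set_sub (X Y : T -> Prop) := forall x, X x -> Y x.

Definition is_ideal (I : (T -> Prop) -> Prop) : Prop :=
  (forall X Y, I X -> set_sub Y X -> I Y) /\
  (forall X Y, I X -> I Y -> I (fun x => X x \/ Y x)) /\
  (forall (a : T) (X : T -> T -> Prop),
      (forall b, lt b a -> I (X b)) ->
      I (fun x => exists b, lt b a /\ X b x)) /\
  (forall a : T, I (fun x => x = a)).

Definition positive (I : (T -> Prop) -> Prop) (A : T -> Prop) := ~ I A.

Definition restrict (I : (T -> Prop) -> Prop) (A : T -> Prop) : (T -> Prop) -> Prop :=
  fun X => I (fun x => X x /\ A x).

Definition diag_union (A : T -> Prop) (X : T -> T -> Prop) : T -> Prop :=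
  fun xi => exists a, lt a xi /\ A a /\ X a xi.

Definition normal (I : (T -> Prop) -> Prop) : Prop :=
  forall X : T -> T -> Prop, (forall a, I (X a)) ->
    I (diag_union (fun _ => True) X).

Definition pleasant (I : (T -> Prop) -> Prop) : Prop :=
  forall (A : T -> Prop) (X : T -> T -> Prop),
    I A -> (forall a, I (X a)) -> I (diag_union A X).
End Defs.

From Stdlib Require Import Classical ClassicalEpsilon Wellfounded.

(* Fix a choice of witness g(xi) < xi with xi in X_{g(xi)} for every xi in the
   diagonal union D, and 2-colour kappa by recursion so that xi and g(xi) get
   different colours.  For a colour class S, the points of D outside S lie in
   the diagonal union over S, and pleasantness of I restricted to that set of
   points (over which S is null) shows the set is null.  D is covered by the
   two such sets. *)

Lemma wf_two_colouring (T : Type) (lt : T -> T -> Prop) (wf_lt : well_founded lt)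
  (D : T -> Prop) (g : T -> T) :
  (forall x, D x -> lt (g x) x) -> exists c : T -> bool, forall x, D x -> c x = negb (c (g x)).
Proof.
  intros g_lt.
  set (step := fun (x : T) (rec : forall y, lt y x -> bool) =>
    match excluded_middle_informative (D x) with
    | left Dx => negb (rec (g x) (g_lt x Dx))
    | right _ => false
    end).
  exists (Fix wf_lt (fun _ => bool) step).
  intros x Dx. rewrite Fix_eq.
  - unfold step at 1. destruct (excluded_middle_informative (D x)); [reflexivity | contradiction].
  - intros y f1 f2 Hf. unfold step.
    destruct (excluded_middle_informative (D y)); [now rewrite Hf | reflexivity].
Qed.

Lemma uncountable_inhabited (T : Type) : uncountable T -> inhabited T.
Proof.
  intros Hunc. apply NNPP. intros Hempty. apply Hunc.
  exists (fun _ => 0). intros x. exfalso. exact (Hempty (inhabits x)).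
Qed.

Lemma ideal_empty (T : Type) (lt : T -> T -> Prop) (I : (T -> Prop) -> Prop) :
  inhabited T -> is_ideal T lt I -> I (fun _ => False).
Proof.
  intros [t] [I_sub [_ [_ I_single]]].
  apply (I_sub _ _ (I_single t)). intros x [].
Qed.

Section PleasantRestrictions.

Variables (T : Type) (lt : T -> T -> Prop) (I : (T -> Prop) -> Prop).
Hypothesis I_sub : forall X Y, I X -> set_sub T Y X -> I Y.
Hypothesis I_union : forall X Y, I X -> I Y -> I (fun x => X x \/ Y x).
Hypothesis I_empty : I (fun _ => False).
Hypothesis restrict_pleasant : forall A, positive T I A -> pleasant T lt (restrict T I A).

Variable X : T -> T -> Prop.
Hypothesis X_null : forall a, I (X a).

Lemma diag_union_outside_null (S : T -> Prop) :
  I (fun x => ~ S x /\ diag_union T lt S X x).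
Proof.
  set (B := fun x => ~ S x /\ diag_union T lt S X x).
  apply NNPP. intros B_pos.
  assert (S_null_on_B : restrict T I B S).
  { apply (I_sub _ _ I_empty). intros x [Sx [nSx _]]. exact (nSx Sx). }
  assert (X_null_on_B : forall a, restrict T I B (X a)).
  { intros a. apply (I_sub _ _ (X_null a)). intros x [Xx _]. exact Xx. }
  apply B_pos, (I_sub _ _ (restrict_pleasant B B_pos S X S_null_on_B X_null_on_B)).
  intros x Bx. split; [exact (proj2 Bx) | exact Bx].
Qed.

Lemma diag_union_null : well_founded lt -> I (diag_union T lt (fun _ => True) X).
Proof.
  intros wf_lt.
  set (D := diag_union T lt (fun _ => True) X).
  destruct (choice (fun x a => D x -> lt a x /\ X a x)) as [g g_spec].
  { intros x. destruct (classic (D x)) as [[a [a_lt [_ Xax]]] | nDx].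
    - exists a. auto.
    - exists x. contradiction. }
  destruct (wf_two_colouring _ _ wf_lt D g) as [c c_alt].
  { intros x Dx. exact (proj1 (g_spec x Dx)). }
  apply (I_sub _ _ (I_union _ _ (diag_union_outside_null (fun x => c x = true))
                                 (diag_union_outside_null (fun x => c x = false)))).
  intros x Dx. destruct (g_spec x Dx) as [g_lt Xgx].
  assert (witness : forall b, c (g x) = b -> diag_union T lt (fun y => c y = b) X x).
  { intros b Eb. exists (g x). auto. }
  specialize (c_alt x Dx).
  destruct (c x), (c (g x)); try discriminate c_alt.
  - right. split; [discriminate | now apply witness].
  - left. split; [discriminate | now apply witness].
Qed.

End PleasantRestrictions.

Theorem theorem2p4 (T : Type) (lt : T -> T -> Prop)
  (Hk : regular_uncountable_cardinal T lt)
  (I : (T -> Prop) -> Prop) (HI : is_ideal T lt I)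
  (Hpl : forall A : T -> Prop, positive T I A -> pleasant T lt (restrict T I A)) :
  normal T lt I.
Proof.
  destruct Hk as [[_ [_ [_ wf_lt]]] [_ [_ Hunc]]].
  pose proof (ideal_empty _ lt I (uncountable_inhabited _ Hunc) HI) as I_empty.
  destruct HI as [I_sub [I_union _]].
  intros X X_null.
  exact (diag_union_null _ _ _ I_sub I_union I_empty Hpl X X_null wf_lt).
Qed.
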